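(* Let $q=2^f\geq 4$ and let $I=\{0,\ f,\ 2f/\gcd(3,f),\ 4f/\gcd(3,f)\}$. Let $b\in\mathbb{F}_{q^2}^\times$ satisfy $b+b^q=1$ and $b^{q+1}\neq 1$. Then there exists an element $a\in\mathbb{F}_{q^2}^\times$ of order $q+1$ such that (1) $(1+b+b^2)^{2^i}\neq a+a^{-1}+1$ for every $i\in I$; (2) $(1+b+b^2)^{2^i}\neq a(1+b+b^3+b^4)+a^{-1}(b^2+b^3+b^4)$ for every $i\in I$; (3) $a+a^{-1}+1\neq a(1+b+b^3+b^4)+a^{-1}(b^2+b^3+b^4)$; (4) $a+a^{-1}+1\neq 0$. *)

From HB Require Import structures.
From mathcomp Require Import all_boot all_order all_algebra.
Set Implicit Arguments. Unset Strict Implicit. Unset Printing Implicit Defensive.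
Import GRing.Theory.
Local Open Scope ring_scope.

Definition index_set (f : nat) : seq nat :=
  [:: 0%N; f; (2 * f %/ gcdn 3 f)%N; (4 * f %/ gcdn 3 f)%N].

From HB Require Import structures.
From mathcomp Require Import all_boot all_order all_algebra.
From mathcomp Require Import cyclic finfield.
From mathcomp Require Import zify ring.

(* Write q = 2^f and c = 1 + b + b^2.  In characteristic 2 the hypotheses say
   that b^q = 1 + b and c <> 0, whence c^q = c.  Multiplied by a, each of the
   four conditions says that a is not a root of some nonzero polynomial of
   degree at most 2, and only the distinct values c^(2^i), i in I, matter: one
   value when 3 does not divide f, at most four otherwise.  For f >= 4 the
   totient(q + 1) >= sqrt(q + 1) primitive (q + 1)-th roots of unity outnumber
   the roots of these quadratics.  For f = 2, 3 this count is too small and we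
   take a = b / (1 + b) = b^(1 - q): its order is q + 1 because q + 1 is 5 or 9
   and a^3 <> 1; it annihilates a (1 + b + b^3 + b^4) + a^-1 (b^2 + b^3 + b^4)
   because 1 + b + b^3 + b^4 = (1 + b)^2 c and b^2 + b^3 + b^4 = b^2 c; and
   a + a^-1 + 1 = c / (c + 1).  What is left for f = 3 amounts to GF(8) having
   no primitive cube root of unity. *)

Set Implicit Arguments.
Unset Strict Implicit.
Unset Printing Implicit Defensive.

Import GRing.Theory.
Local Open Scope ring_scope.

Lemma leq_totient_sqr n : odd n -> (n <= totient n ^ 2)%N.
Proof.
move=> odd_n; have n_gt0 : (0 < n)%N by case: n odd_n.
rewrite totientE // {1}(prod_prime_decomp n_gt0) prime_decompE big_map /=.
rewrite -mulnn -big_split /= big_seq [X in (_ <= X)%N]big_seq.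
apply: leq_prod => p.
rewrite mem_primes => /and3P [p_pr _ p_dvd_n].
have p_gt2 : (2 < p)%N.
  rewrite ltn_neqAle prime_gt1 // andbT; apply: contraTneq odd_n => p2.
  by rewrite -dvdn2 p2.
have : (0 < logn p n)%N by rewrite logn_gt0 mem_primes p_pr n_gt0 p_dvd_n.
case: (logn p n) => // k _ /=; rewrite expnS mulnACA.
apply: leq_mul; first nia.
by rewrite leq_pmulr // expn_gt0 prime_gt0.
Qed.

Lemma totient_exp2S_gt f : (4 <= f)%N ->
  ((if 3 %| f then 20 else 8) < totient (2 ^ f).+1)%N.
Proof.
move=> f_ge4; have [f_le8 | f_gt8] := leqP f 8.
  by case: f f_ge4 f_le8 => [|[|[|[|[|[|[|[|[|]]]]]]]]].
have odd_n : odd (2 ^ f).+1 by rewrite /= oddX orbF -lt0n; lia.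
have := leq_totient_sqr odd_n; have : (2 ^ 9 <= 2 ^ f)%N by rewrite leq_exp2l.
case: ifP => _; set t := totient _; set m := (2 ^ f)%N; nia.
Qed.

Lemma size_prod_seq_leq (R : nzRingType) d (ps : seq {poly R}) :
  all (fun p : {poly R} => (size p <= d.+1)%N) ps ->
  (size (\prod_(p <- ps) p)%R <= (d * size ps).+1)%N.
Proof.
elim: ps => [|p ps IHps] /=; first by rewrite big_nil size_poly1.
case/andP=> size_p /IHps; rewrite big_cons mulnS.
move: (\prod_(q <- ps) q) => Q size_Q.
apply: leq_trans (size_polyMleq _ _) _; move: (size p) (size Q) size_p size_Q.
lia.
Qed.

Lemma exists_nonroot_seq (R : idomainType) d (s : seq R) (ps : seq {poly R}) :
    uniq s -> all (fun p : {poly R} => (p != 0) && (size p <= d.+1)%N) ps ->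
    (d * size ps < size s)%N ->
  exists2 x, x \in s & all (fun p => ~~ root p x) ps.
Proof.
move=> uniq_s /allP ps_ok lt_ps_s; pose P := \prod_(p <- ps) p.
have P_neq0 : P != 0.
  by rewrite prodf_seq_neq0; apply/allP => p /ps_ok /andP [].
have size_P : (size P <= (d * size ps).+1)%N.
  by apply: size_prod_seq_leq; apply/allP => p /ps_ok /andP [].
have : ~~ all (root P) s.
  apply: contraTN lt_ps_s => roots_s; rewrite -leqNgt -ltnS.
  exact: leq_trans (max_poly_roots P_neq0 roots_s uniq_s) size_P.
by rewrite -has_predC => /hasP [x x_s]; rewrite /= root_bigmul; exists x.
Qed.

Definition quadratic (R : nzRingType) (x y z : R) : {poly R} :=
  x *: 'X^2 + y *: 'X + z%:P.

Lemma size_quadratic_leq (R : nzRingType) (x y z : R) :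
  (size (quadratic x y z) <= 3)%N.
Proof.
rewrite /quadratic; apply: (leq_trans (size_polyD _ _)).
rewrite geq_max (leq_trans (size_polyC_leq1 _)) // andbT.
apply: (leq_trans (size_polyD _ _)); rewrite geq_max.
by rewrite !(leq_trans (size_scale_leq _ _)) ?size_polyXn ?size_polyX.
Qed.

Lemma quadratic_neq0 (R : nzRingType) (x y z : R) :
  (y != 0) || (z != 0) -> quadratic x y z != 0.
Proof.
have lowest_coef : (quadratic x y z)`_0 = z.
  by rewrite !coefD !coefZ coefXn coefX coefC !mulr0 !add0r.
have linear_coef : (quadratic x y z)`_1 = y.
  by rewrite !coefD !coefZ coefXn coefX coefC mulr0 mulr1 add0r addr0.
case/orP; apply: contraNneq => q_eq0.
  by rewrite -linear_coef q_eq0 coef0.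
by rewrite -lowest_coef q_eq0 coef0.
Qed.

Lemma root_quadratic (F : fieldType) (x y z a : F) : a != 0 ->
  root (quadratic x y z) a = (x * a + y + z / a == 0).
Proof.
move=> a_neq0; rewrite rootE.
have -> : (quadratic x y z).[a] = a * (x * a + y + z / a).
  by rewrite /quadratic !hornerD !hornerZ hornerXn hornerX hornerC; field.
by rewrite mulf_eq0 (negbTE a_neq0).
Qed.

Lemma prim_root_neq0 (R : nzRingType) n (z : R) : n.-primitive_root z -> z != 0.
Proof.
move=> prim_z; apply/eqP => z_eq0; move: (prim_expr_order prim_z).
rewrite z_eq0 expr0n gtn_eqF ?(prim_order_gt0 prim_z) // => /eqP.
by rewrite eq_sym oner_eq0.
Qed.

Lemma prim_root_prime_power p k (R : idomainType) (z : R) : prime p ->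
  z ^+ (p ^ k.+1) = 1 -> z ^+ (p ^ k) != 1 -> (p ^ k.+1).-primitive_root z.
Proof.
move=> p_pr zpk1 zpk_neq1.
have pk_gt0 : (0 < p ^ k.+1)%N by rewrite expn_gt0 prime_gt0.
have [m prim_m /(dvdn_pfactor _ _ p_pr) [j j_le m_eq]] :=
  prim_order_exists pk_gt0 zpk1.
suff j_eq : j = k.+1 by rewrite -j_eq -m_eq.
apply/eqP; rewrite eqn_leq j_le leqNgt; apply: contra zpk_neq1 => j_le_k.
by rewrite -(prim_order_dvd prim_m) m_eq dvdn_exp2l.
Qed.

Lemma totient_leq_card_prim_root (F : finFieldType) n (z : F) :
  n.-primitive_root z -> (totient n <= #|[pred x : F | n.-primitive_root x]|)%N.
Proof.
move=> prim_z; pose E := [pred k : 'I_n | coprime k n].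
have -> : totient n = #|E|.
  rewrite -sum1_card totient_count_coprime big_mkord [RHS]big_mkcond /=.
  by apply: eq_bigr => k _; rewrite coprime_sym inE; case: ifP.
have inj_exp : {in E &, injective (fun k : 'I_n => z ^+ k)}.
  move=> i j _ _ /eqP; rewrite (eq_prim_root_expr prim_z) !modn_small //.
  by move=> /eqP /val_inj.
rewrite -(card_in_imset inj_exp); apply: subset_leq_card; apply/subsetP => x.
by case/imsetP => k k_E ->; rewrite inE /= prim_root_exp_coprime.
Qed.

Lemma prim_root_exists_dvd (F : finFieldType) n :
  (n %| #|F|.-1)%N -> exists z : F, n.-primitive_root z.
Proof.
move=> n_dvd; set N := #|F|.-1 in n_dvd.
have N_eq : N = #|[pred x : F | x != 0]| by rewrite cardC1.
have N_gt0 : (0 < N)%N.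
  by rewrite N_eq; apply/card_gt0P; exists 1; rewrite inE oner_neq0.
have : has N.-primitive_root (enum [pred x : F | x != 0]).
  apply: has_prim_root => //; [|exact: enum_uniq|by rewrite -cardE N_eq].
  apply/allP => x; rewrite mem_enum inE => x_neq0.
  have F_gt0 : (0 < #|F|)%N by apply/card_gt0P; exists x.
  rewrite unity_rootE -(inj_eq (mulIf x_neq0)) mul1r -exprSr.
  by rewrite prednK ?expf_card.
case/hasP => g _ prim_g; exists (g ^+ (N %/ n)%N).
have [k N_eq_kn] : exists k, N = (k * n)%N by exists (N %/ n)%N; rewrite divnK.
have k_gt0 : (0 < k)%N by move: N_gt0; rewrite N_eq_kn muln_gt0 => /andP [].
have n_gt0 : (0 < n)%N by move: N_gt0; rewrite N_eq_kn muln_gt0 => /andP [].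
have := exp_prim_root prim_g (N %/ n)%N.
by rewrite N_eq_kn (mulnK k n_gt0) (gcdn_idPl (dvdn_mulr _ (dvdnn k))) mulKn.
Qed.

Lemma exists_prim_root_avoiding (F : finFieldType) n (vs : seq F) (X Y : F) :
    (exists z : F, n.-primitive_root z) -> Y != 0 ->
    (4 * size vs + 4 < totient n)%N ->
  exists2 a, n.-primitive_root a & [/\ {in vs, forall v, v != a + a^-1 + 1},
    {in vs, forall v, v != a * X + a^-1 * Y},
    a + a^-1 + 1 != a * X + a^-1 * Y & a + a^-1 + 1 != 0].
Proof.
move=> [g prim_g] Y_neq0 lt_vs_n.
(* Multiplied by a, the four conditions say that a is a root of none of these. *)
pose ps := [seq quadratic 1 (1 - v) 1 | v <- vs] ++
  [seq quadratic X (- v) Y | v <- vs] ++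
  [:: quadratic (1 - X) 1 (1 - Y); quadratic 1 1 1].
have ps_ok : all (fun p : {poly F} => (p != 0) && (size p <= 3)%N) ps.
  apply/allP => p; rewrite !mem_cat !inE.
  case/or4P => [/mapP [v _ ->]|/mapP [v _ ->]|/eqP ->|/eqP ->];
  by rewrite size_quadratic_leq quadratic_neq0 ?oner_neq0 ?Y_neq0 ?orbT.
have lt_ps_prim : (2 * size ps < size (enum [pred x : F | n.-primitive_root x]))%N.
  rewrite -cardE; apply: leq_trans (totient_leq_card_prim_root prim_g).
  by rewrite !size_cat !size_map /=; lia.
have [a] := exists_nonroot_seq (enum_uniq _) ps_ok lt_ps_prim.
rewrite mem_enum => prim_a /allP avoid_ps; exists a => //.
have a_neq0 := prim_root_neq0 prim_a.
have avoid x y z : quadratic x y z \in ps -> x * a + y + z / a != 0.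
  by move/avoid_ps; rewrite root_quadratic.
split.
- move=> v v_vs; apply: contraNneq (avoid 1 (1 - v) 1 _) => [->|].
    by apply/eqP; ring.
  by rewrite mem_cat (map_f (fun v => quadratic 1 (1 - v) 1)).
- move=> v v_vs; apply: contraNneq (avoid X (- v) Y _) => [->|].
    by apply/eqP; ring.
  by rewrite !mem_cat (map_f (fun v => quadratic X (- v) Y)) ?orbT.
- apply: contraNneq (avoid (1 - X) 1 (1 - Y) _) => [E|].
    have -> : (1 - X) * a + 1 + (1 - Y) / a =
      a + a^-1 + 1 - (a * X + a^-1 * Y) by ring.
    by rewrite E subrr.
  by rewrite !mem_cat !inE eqxx !orbT.
- apply: contraNneq (avoid 1 1 1 _) => [E|].
    by apply/eqP; rewrite -E; ring.
  by rewrite !mem_cat !inE eqxx !orbT.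
Qed.

Definition admissible (F : fieldType) (f : nat) (b a : F) : Prop := [/\
  (forall i, i \in index_set f -> (1 + b + b ^+ 2) ^+ (2 ^ i) != a + a^-1 + 1),
  (forall i, i \in index_set f -> (1 + b + b ^+ 2) ^+ (2 ^ i) !=
      a * (1 + b + b ^+ 3 + b ^+ 4) + a^-1 * (b ^+ 2 + b ^+ 3 + b ^+ 4)),
  a + a^-1 + 1 != a * (1 + b + b ^+ 3 + b ^+ 4) + a^-1 * (b ^+ 2 + b ^+ 3 + b ^+ 4)
  & a + a^-1 + 1 != 0].

Section CharTwo.

Variable F : fieldType.
Hypothesis pchar2 : 2 \in [pchar F].

Lemma exprD_exp2 (x y : F) k : (x + y) ^+ (2 ^ k) = x ^+ (2 ^ k) + y ^+ (2 ^ k).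
Proof. by apply: exprDn_pchar; rewrite pnatX pnatE // pchar2. Qed.

Lemma expr8_id_cyclo3_neq0 (x : F) : x ^+ 8 = x -> x ^+ 2 + x + 1 != 0.
Proof.
move=> x8; apply/eqP => x_cyclo3.
have x2 : x ^+ 2 = x + 1.
  by apply/eqP; rewrite -(oppr_pchar2 pchar2 (x + 1)) -addr_eq0 addrA x_cyclo3.
have x4 : x ^+ 4 = x.
  rewrite (exprM x 2 2) x2 (exprD_exp2 x 1 1) expr1n x2 -addrA.
  by rewrite (addrr_pchar2 pchar2) addr0.
move: x8; rewrite (exprM x 4 2) x4 x2 => /eqP.
by rewrite -subr_eq0 addrAC subrr add0r oner_eq0.
Qed.

Lemma expr8_id_expr4_neq (x : F) : x ^+ 8 = x -> x != 0 -> x ^+ 4 * (x + 1) != x.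
Proof.
move=> x8 x_neq0; apply: contra (expr8_id_cyclo3_neq0 x8) => /eqP x4_eq.
have : (x ^+ 4 * (x + 1)) ^+ 2 = x * x by rewrite x4_eq expr2.
rewrite exprMn -exprM x8 (exprD_exp2 x 1 1) expn1 expr1n => /(mulfI x_neq0) x2.
by rewrite addrAC x2 (addrr_pchar2 pchar2).
Qed.

Lemma expr8_id_expr16_neq (x : F) : x ^+ 8 = x -> x != 0 -> x ^+ 16 * (x + 1) != x.
Proof.
move=> x8 x_neq0; apply: contra (expr8_id_cyclo3_neq0 x8) => /eqP x16_eq.
have x16 : x ^+ 16 = x ^+ 2 by rewrite (exprM x 8 2) x8.
have : x * (x * (x + 1)) = x * 1 by rewrite mulrA -expr2 -x16 x16_eq mulr1.
move/(mulfI x_neq0) => xx1.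
have -> : x ^+ 2 + x + 1 = x * (x + 1) + 1 by ring.
by rewrite xx1 (addrr_pchar2 pchar2).
Qed.

Variables (f : nat) (b : F).
Hypotheses (b_neq0 : b != 0) (b_frob : b ^+ (2 ^ f) = 1 + b).
Hypothesis c_neq0 : 1 + b + b ^+ 2 != 0.

Local Notation c := (1 + b + b ^+ 2).

Lemma expr_c_frob : c ^+ (2 ^ f) = c.
Proof.
rewrite !exprD_exp2 expr1n exprAC b_frob.
have -> : 1 + (1 + b) + (1 + b) ^+ 2 = c + ((1 + b) + (1 + b)) by ring.
by rewrite (addrr_pchar2 pchar2) addr0.
Qed.

Lemma expr_c_index_set i : ~~ (3 %| f)%N -> i \in index_set f -> c ^+ (2 ^ i) = c.
Proof.
move=> f_coprime3; have gcd_f : gcdn 3 f = 1%N.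
  by apply/eqP; rewrite -/(coprime 3 f) prime_coprime.
have c_frob k : c ^+ (2 ^ (k * f)) = c.
  by elim: k => [|k IHk]; rewrite ?expr1 // mulSn expnD exprM expr_c_frob.
rewrite /index_set gcd_f !divn1 !inE => /or4P [] /eqP ->.
- by rewrite expr1.
- by rewrite -[f in (2 ^ f)%N]mul1n c_frob.
- exact: c_frob.
- exact: c_frob.
Qed.

Lemma c_mul_neq_c : c * (b + b ^+ 2) != c.
Proof.
apply: contraNneq c_neq0 => c_bb2.
have bb2 : b + b ^+ 2 = 1 by apply: (mulfI c_neq0); rewrite mulr1.
by rewrite -addrA bb2 (addrr_pchar2 pchar2).
Qed.

Lemma oneDb_neq0 : 1 + b != 0.
Proof. by rewrite -b_frob expf_neq0. Qed.

Lemma bDb2_neq0 : b + b ^+ 2 != 0.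
Proof.
have -> : b + b ^+ 2 = b * (1 + b) by ring.
by rewrite mulf_neq0 ?oneDb_neq0.
Qed.

Local Notation w := (b / (1 + b)).

Lemma witness_neq0 : w != 0.
Proof. by rewrite mulf_neq0 ?invr_eq0 ?oneDb_neq0. Qed.

Lemma witness_neq1 : w != 1.
Proof.
apply/eqP => w1; have := divfK oneDb_neq0 b; rewrite w1 mul1r.
by move/(congr1 (fun x => x - b)); rewrite subrr addrK => /eqP; rewrite oner_eq0.
Qed.

Lemma witness_frob : w ^+ (2 ^ f) = w^-1.
Proof.
rewrite expr_div_n b_frob exprD_exp2 expr1n b_frob addrA.
by rewrite (addrr_pchar2 pchar2) add0r invf_div.
Qed.

Lemma witness_order : w ^+ (2 ^ f).+1 = 1.
Proof. by rewrite exprSr witness_frob mulVf ?witness_neq0. Qed.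

Lemma witness_cancel :
  w * (1 + b + b ^+ 3 + b ^+ 4) + w^-1 * (b ^+ 2 + b ^+ 3 + b ^+ 4) = 0.
Proof.
have -> : 1 + b + b ^+ 3 + b ^+ 4 =
    (1 + b) ^+ 2 * c - (b * (1 + b) ^+ 2 + b * (1 + b) ^+ 2) by ring.
rewrite (addrr_pchar2 pchar2) subr0.
have -> : w * ((1 + b) ^+ 2 * c) + w^-1 * (b ^+ 2 + b ^+ 3 + b ^+ 4) =
    b * (1 + b) * c + b * (1 + b) * c by field; rewrite oneDb_neq0 b_neq0.
exact: addrr_pchar2.
Qed.

Lemma witness_sum : w + w^-1 + 1 = c / (b + b ^+ 2).
Proof.
have -> : w + w^-1 + 1 = (c + (b + b) + (b ^+ 2 + b ^+ 2)) / (b + b ^+ 2).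
  by field; rewrite oneDb_neq0 b_neq0 bDb2_neq0.
by rewrite !(addrr_pchar2 pchar2) !addr0.
Qed.

Lemma witness_sum_neq0 : w + w^-1 + 1 != 0.
Proof.
by rewrite witness_sum mulf_neq0 ?invr_eq0 ?bDb2_neq0.
Qed.

Lemma witness_expr3_neq1 : w ^+ 3 != 1.
Proof.
have factor : w ^+ 3 - 1 = (w - 1) * w * (w + w^-1 + 1).
  by field; rewrite oneDb_neq0 b_neq0.
rewrite -subr_eq0 factor mulf_neq0 ?witness_sum_neq0 // mulf_neq0 ?witness_neq0 //.
by rewrite subr_eq0 witness_neq1.
Qed.

Lemma witness_admissible :
    (forall i, i \in index_set f -> c ^+ (2 ^ i) * (b + b ^+ 2) != c) ->
  admissible f b w.
Proof.
move=> avoid_sum; split=> [i /avoid_sum|i _||].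
- by apply: contraNneq => ->; rewrite witness_sum divfK ?bDb2_neq0.
- by rewrite witness_cancel expf_neq0.
- by rewrite witness_cancel witness_sum_neq0.
- exact: witness_sum_neq0.
Qed.

Lemma witness_admissible_coprime3 : ~~ (3 %| f)%N -> admissible f b w.
Proof.
move=> f_coprime3; apply: witness_admissible => i.
by move/(expr_c_index_set f_coprime3) ->; apply: c_mul_neq_c.
Qed.

Lemma bDb2E : b + b ^+ 2 = c + 1.
Proof.
have -> : b + b ^+ 2 = c + 1 - (1 + 1) by ring.
by rewrite (addrr_pchar2 pchar2) subr0.
Qed.

Lemma witness_admissible_f3 : f = 3 -> admissible f b w.
Proof.
move=> f_eq3; apply: witness_admissible => i; rewrite bDb2E.
have c8 := expr_c_frob; rewrite f_eq3 in c8 *.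
rewrite (_ : index_set 3 = [:: 0; 3; 2; 4]%N) // !inE => /or4P [] /eqP ->.
- by rewrite expr1 -bDb2E c_mul_neq_c.
- by rewrite c8 -bDb2E c_mul_neq_c.
- by rewrite expr8_id_expr4_neq.
- by rewrite expr8_id_expr16_neq.
Qed.

Lemma witness_prim_root : f = 2 \/ f = 3 -> (2 ^ f).+1.-primitive_root w.
Proof.
have w_order := witness_order.
case=> f_eq; rewrite f_eq in w_order *.
  apply: (@prim_root_prime_power 5 0) => //.
  by rewrite expr1 witness_neq1.
apply: (@prim_root_prime_power 3 1) => //.
exact: witness_expr3_neq1.
Qed.

End CharTwo.

Lemma exists_admissible_large (F : finFieldType) f (b : F) :
    (4 <= f)%N -> #|F| = ((2 ^ f) ^ 2)%N -> 2 \in [pchar F] -> b != 0 ->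
    b ^+ (2 ^ f) = 1 + b -> 1 + b + b ^+ 2 != 0 ->
  exists a, (2 ^ f).+1.-primitive_root a /\ admissible f b a.
Proof.
move=> f_ge4 F_card pchar2 b_neq0 b_frob c_neq0.
set c := 1 + b + b ^+ 2 in c_neq0 *.
pose vs := undup [seq c ^+ (2 ^ i) | i <- index_set f].
have size_vs : (size vs <= if 3 %| f then 4 else 1)%N.
  case: ifP => [_ | f_coprime3]; first by rewrite (leq_trans (size_undup _)) ?size_map.
  suff sub_c : {subset vs <= [:: c]} by exact: uniq_leq_size (undup_uniq _) sub_c.
  move=> v; rewrite mem_undup => /mapP [i i_index ->].
  by rewrite (expr_c_index_set pchar2 b_frob) ?negbT // -/c mem_seq1.
have prim_exists : exists z : F, (2 ^ f).+1.-primitive_root z.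
  apply: prim_root_exists_dvd.
  rewrite F_card -subn1; apply/dvdnP; exists (2 ^ f - 1)%N.
  have : (0 < 2 ^ f)%N by rewrite expn_gt0.
  move: (2 ^ f)%N => m; nia.
have Y_neq0 : b ^+ 2 + b ^+ 3 + b ^+ 4 != 0.
  have -> : b ^+ 2 + b ^+ 3 + b ^+ 4 = b ^+ 2 * c by rewrite /c; ring.
  by rewrite mulf_neq0 ?expf_neq0.
have lt_vs_totient : (4 * size vs + 4 < totient (2 ^ f).+1)%N.
  by move: (totient_exp2S_gt f_ge4) size_vs; case: ifP => _; lia.
have [a prim_a [avoid1 avoid2 avoid3 avoid4]] :=
  exists_prim_root_avoiding (1 + b + b ^+ 3 + b ^+ 4) prim_exists Y_neq0
    lt_vs_totient.
exists a; split=> //; split=> // i i_index; [apply: avoid1 | apply: avoid2];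
  by rewrite mem_undup (map_f (fun j => c ^+ (2 ^ j))).
Qed.

Theorem lemma3p1 (f : nat) (F : finFieldType)
  (hf : (2 <= f)%N) (hF : #|F| = ((2 ^ f) ^ 2)%N) (b : F)
  (hb0 : b != 0) (hbtr : b + b ^+ (2 ^ f) = 1) (hbn : b ^+ (2 ^ f).+1 != 1) :
  exists a : F, a != 0 /\ (2 ^ f).+1.-primitive_root a /\ [/\
    (forall i, i \in index_set f -> (1 + b + b ^+ 2) ^+ (2 ^ i) != a + a^-1 + 1),
    (forall i, i \in index_set f -> (1 + b + b ^+ 2) ^+ (2 ^ i) !=
        a * (1 + b + b ^+ 3 + b ^+ 4) + a^-1 * (b ^+ 2 + b ^+ 3 + b ^+ 4)),
    a + a^-1 + 1 != a * (1 + b + b ^+ 3 + b ^+ 4) + a^-1 * (b ^+ 2 + b ^+ 3 + b ^+ 4)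
    & a + a^-1 + 1 != 0].
Proof.
have pchar2 : 2 \in [pchar F].
  by apply: (@card_finPcharP _ _ (f * 2)); rewrite // hF expnM.
have b_frob : b ^+ (2 ^ f) = 1 + b.
  by apply: (addrI b); rewrite hbtr addrCA (addrr_pchar2 pchar2) addr0.
have c_neq0 : 1 + b + b ^+ 2 != 0.
  apply: contraNneq hbn => c_eq0; rewrite exprS b_frob.
  have -> : b * (1 + b) = 1 + b + b ^+ 2 - 1 by ring.
  by rewrite c_eq0 sub0r (oppr_pchar2 pchar2).
have [a [prim_a admissible_a]] :
    exists a, (2 ^ f).+1.-primitive_root a /\ admissible f b a.
  have [f_ge4 | f_lt4] := leqP 4 f; first exact: exists_admissible_large.
  have f_small : f = 2 \/ f = 3 by lia.
  exists (b / (1 + b)); split; first exact: witness_prim_root.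
  case: f_small => [f_eq2 | f_eq3]; last exact: witness_admissible_f3.
  by apply: witness_admissible_coprime3 => //; rewrite f_eq2.
by exists a; split; first exact: prim_root_neq0 prim_a.
Qed.
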